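(* Let $m,u$ be independent indeterminates over $\mathbb{Q}$ and set $q=\frac{2(u-m)}{1+m^2-u^2}$. Then $\operatorname{rank}E_{m,q}(\mathbb{Q}(m,u))\ge2$. More precisely, the points $P_{m,q}=\bigl(-\tfrac{(2m^2-1)q^2+4mq+1}{3},\,q(mq+1)^2\bigr)$ and $H_{m,q}=(x_{m,u},y_{m,u})$ with $$x_{m,u}=\frac{5m^4+(6-10u)m^3+(4u^2-6u+10)m^2+2(u^3-3u^2-5u+3)m-u^4+6u^3-6u+5}{3(m^2-u^2+1)^2},\quad y_{m,u}=\frac{2(m-u+1)^2(m^2-um+1)}{(m^2-u^2+1)^2}$$ lie in $E_{m,q}(\mathbb{Q}(m,u))$ and are linearly independent.
   Context: For $m,q$ (rational numbers or elements of a field), $E_{m,q}$ denotes the curve given by the Weierstrass equation $$y^2=x^3-\tfrac13\bigl[(m^2+1)^2q^4+4m(m^2+1)q^3+(5m^2+4)q^2+2mq+1\bigr]x+\tfrac1{27}\bigl[2(m^2+1)^2q^4+8m(m^2+1)q^3+(7m^2+8)q^2-2mq-1\bigr]\bigl[(m^2+1)q^2+2mq+2\bigr].$$ *)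

From HB Require Import structures.
From mathcomp Require Import all_boot all_order all_algebra.
Set Implicit Arguments. Unset Strict Implicit. Unset Printing Implicit Defensive.
Import Order.TTheory GRing.Theory Num.Theory.
Local Open Scope ring_scope.

(* Points of a short Weierstrass curve y^2 = x^3 + A x + B over a field F:
   None is the point at infinity O, Some (x, y) an affine point. *)
Definition point (F : fieldType) := option (F * F).

Definition on_curve (F : fieldType) (A B : F) (P : point F) : bool :=
  if P is Some (x, y) then y ^+ 2 == x ^+ 3 + A * x + B else true.

Definition neg_pt (F : fieldType) (P : point F) : point F :=
  if P is Some (x, y) then Some (x, - y) else None.

Definition add_pt (F : fieldType) (A : F) (P Q : point F) : point F :=
  match P, Q with
  | None, _ => Q
  | _, None => P
  | Some (x1, y1), Some (x2, y2) =>
      if x1 == x2 then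
        if y1 == - y2 then None
        else
          let l := (3 * x1 ^+ 2 + A) / (2 * y1) in
          let x3 := l ^+ 2 - x1 - x2 in
          Some (x3, l * (x1 - x3) - y1)
      else
        let l := (y2 - y1) / (x2 - x1) in
        let x3 := l ^+ 2 - x1 - x2 in
        Some (x3, l * (x1 - x3) - y1)
  end.

Definition mul_pt (F : fieldType) (A : F) (n : int) (P : point F) : point F :=
  match n with
  | Posz k => iter k (add_pt A P) None
  | Negz k => neg_pt (iter k.+1 (add_pt A P) None)
  end.

Definition EA (F : fieldType) (m q : F) : F :=
  - (3%:R)^-1 * ((m ^+ 2 + 1) ^+ 2 * q ^+ 4 + 4%:R * m * (m ^+ 2 + 1) * q ^+ 3
                 + (5%:R * m ^+ 2 + 4%:R) * q ^+ 2 + 2%:R * m * q + 1).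

Definition EB (F : fieldType) (m q : F) : F :=
  (27%:R)^-1 * ((2%:R * (m ^+ 2 + 1) ^+ 2 * q ^+ 4 + 8%:R * m * (m ^+ 2 + 1) * q ^+ 3
                 + (7%:R * m ^+ 2 + 8%:R) * q ^+ 2 - 2%:R * m * q - 1)
                * ((m ^+ 2 + 1) * q ^+ 2 + 2%:R * m * q + 2%:R)).

Definition pts_independent (F : fieldType) (A : F) (P H : point F) : Prop :=
  forall a b : int, add_pt A (mul_pt A a P) (mul_pt A b H) = None -> a = 0 /\ b = 0.

Definition Kmu := {fraction {poly {poly rat}}}.
Definition m_var : Kmu := tofrac (('X : {poly rat})%:P).
Definition u_var : Kmu := tofrac ('X : {poly {poly rat}}).

Definition q_mu : Kmu := 2%:R * (u_var - m_var) / (1 + m_var ^+ 2 - u_var ^+ 2).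

Definition P_pt (F : fieldType) (m q : F) : point F :=
  Some (- ((2%:R * m ^+ 2 - 1) * q ^+ 2 + 4%:R * m * q + 1) / 3%:R,
        q * (m * q + 1) ^+ 2).

Definition H_pt (F : fieldType) (m u : F) : point F :=
  Some ((5%:R * m ^+ 4 + (6%:R - 10%:R * u) * m ^+ 3 + (4%:R * u ^+ 2 - 6%:R * u + 10%:R) * m ^+ 2
         + 2%:R * (u ^+ 3 - 3%:R * u ^+ 2 - 5%:R * u + 3%:R) * m
         - u ^+ 4 + 6%:R * u ^+ 3 - 6%:R * u + 5%:R)
        / (3%:R * (m ^+ 2 - u ^+ 2 + 1) ^+ 2),
        2%:R * (m - u + 1) ^+ 2 * (m ^+ 2 - u * m + 1) / (m ^+ 2 - u ^+ 2 + 1) ^+ 2).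

(* Specialise (m, u) to (i, -i/3). There m^2 + 1 = 0 and q = -24i, and E_{m,q}
   degenerates to the nodal cubic y^2 = x^3 - c^4/3 x + 2c^6/27 with c = 5i.
   Its smooth points are parametrised by x = t^2 - 2c^2/3, y = t (t^2 - c^2),
   t^2 <> c^2, and t |-> (t + c)/(t - c) turns the chord-tangent law into
   multiplication in C^*. Specialisation is only a partial map Q(m,u) -> C, but
   it commutes with the group law as long as the branches of the addition
   formula agree, which holds along all multiples aP and bH. P and H specialise
   to the parameters 25i and -3 - 4i, with multiplicative coordinates 3/2 and
   -i/3, so aP + bH = O would give (3/2)^a (-i/3)^b = 1; taking absolute
   values, 3^(a-b) = 2^a, whence a = b = 0. *)

From HB Require Import structures.
From mathcomp Require Import all_boot all_order all_algebra all_field.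
From mathcomp Require Import ring.
Set Implicit Arguments.
Unset Strict Implicit.
Unset Printing Implicit Defensive.
Import Order.TTheory GRing.Theory Num.Theory.
Local Open Scope ring_scope.

Lemma add_pt_eq_None (F : fieldType) (A : F) (X Y : point F) :
  add_pt A X Y = None -> X = neg_pt Y.
Proof.
case: X Y => [[x1 y1]|] [[x2 y2]|] //=.
by case: eqP => [-> | //]; case: eqP => [-> | //].
Qed.

Section NodalCubic.
Variables (F : fieldType) (c : F).
Hypotheses (two_neq0 : 2%:R != 0 :> F) (three_neq0 : 3%:R != 0 :> F).

(* The curve y^2 = x^3 + nodal_A x + 2c^6/27, with a node at (c^2/3, 0); only
   nodal_A enters the addition law [add_pt]. *)
Definition nodal_A : F := - c ^+ 4 / 3%:R.
Definition nodal_x (t : F) : F := t ^+ 2 - 2%:R / 3%:R * c ^+ 2.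
Definition nodal_y (t : F) : F := t * (t ^+ 2 - c ^+ 2).
Definition nodal_pt (t : F) : point F := Some (nodal_x t, nodal_y t).
Definition nodal_sum (t1 t2 : F) : F := (t1 * t2 + c ^+ 2) / (t1 + t2).
Definition nodal_z (t : F) : F := (t + c) / (t - c).

Lemma sqr_neq_sub_add (t : F) :
  t ^+ 2 != c ^+ 2 -> (t - c != 0) && (t + c != 0).
Proof. by rewrite -subr_eq0 subr_sqr mulf_eq0 negb_or. Qed.

Lemma nodal_y_neq_opp (t : F) :
  t != 0 -> t ^+ 2 != c ^+ 2 -> nodal_y t != - nodal_y t.
Proof.
move=> t0 tc; rewrite -addr_eq0 -mulr2n -mulr_natl !mulf_eq0 subr_eq0.
by rewrite (negbTE two_neq0) (negbTE t0) (negbTE tc).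
Qed.

Lemma nodal_add (t1 t2 : F) : t1 + t2 != 0 -> t1 ^+ 2 != c ^+ 2 ->
  add_pt nodal_A (nodal_pt t1) (nodal_pt t2) = nodal_pt (nodal_sum t1 t2).
Proof.
case: (eqVneq t1 t2) => [<- | neq12] t12 t1c /=.
  have t1_neq0 : t1 != 0 by apply: contraNneq t12 => ->; rewrite addr0.
  rewrite eqxx ifN ?nodal_y_neq_opp // /nodal_pt /nodal_x /nodal_y /nodal_A /nodal_sum.
  by congr (Some (_, _)); field; rewrite two_neq0 three_neq0 t1_neq0 t12 subr_eq0 t1c.
have t21 : t2 - t1 != 0 by rewrite subr_eq0 eq_sym.
have dx : nodal_x t2 - nodal_x t1 = (t2 - t1) * (t1 + t2) by rewrite /nodal_x; ring.
rewrite ifN; last by rewrite -subr_eq0 -oppr_eq0 opprB dx mulf_neq0.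
rewrite dx /nodal_pt /nodal_x /nodal_y /nodal_sum.
by congr (Some (_, _)); field; rewrite three_neq0 t12 t21.
Qed.

Lemma nodal_neg (t : F) : neg_pt (nodal_pt t) = nodal_pt (- t).
Proof. by rewrite /nodal_pt /nodal_x /nodal_y /= sqrrN mulNr. Qed.

Lemma nodal_pt_inj (t1 t2 : F) : t1 ^+ 2 != c ^+ 2 ->
  nodal_pt t1 = nodal_pt t2 -> t1 = t2.
Proof.
move=> t1c [/addIr/eqP]; rewrite eqf_sqr => /orP[/eqP // | /eqP t12].
move: t1c; rewrite t12 /nodal_y sqrrN mulNr => t2c /eqP; rewrite eq_sym.
have [-> | t2_neq0] := eqVneq t2 0; first by rewrite oppr0.
by rewrite (negbTE (nodal_y_neq_opp t2_neq0 t2c)).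
Qed.

Lemma nodal_sum_sqr (t1 t2 : F) : t1 ^+ 2 != c ^+ 2 -> t2 ^+ 2 != c ^+ 2 ->
  t1 + t2 != 0 -> nodal_sum t1 t2 ^+ 2 != c ^+ 2.
Proof.
move=> t1c t2c t12; rewrite -subr_eq0.
have -> : nodal_sum t1 t2 ^+ 2 - c ^+ 2
          = (t1 ^+ 2 - c ^+ 2) * (t2 ^+ 2 - c ^+ 2) / (t1 + t2) ^+ 2.
  by rewrite /nodal_sum; field.
by rewrite !mulf_neq0 ?invr_eq0 ?expf_neq0 ?subr_eq0.
Qed.

Lemma nodal_z_neq0 (t : F) : t ^+ 2 != c ^+ 2 -> nodal_z t != 0.
Proof. by case/sqr_neq_sub_add/andP => tc tc'; rewrite mulf_neq0 ?invr_eq0. Qed.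

Lemma nodal_zN (t : F) : t ^+ 2 != c ^+ 2 -> nodal_z (- t) = (nodal_z t)^-1.
Proof.
case/sqr_neq_sub_add/andP => tc tc'.
by rewrite /nodal_z invf_div; field; rewrite -opprD oppr_eq0 tc'.
Qed.

Lemma nodal_zM (t1 t2 : F) : t1 ^+ 2 != c ^+ 2 -> t2 ^+ 2 != c ^+ 2 ->
  t1 + t2 != 0 -> nodal_z (nodal_sum t1 t2) = nodal_z t1 * nodal_z t2.
Proof.
case/sqr_neq_sub_add/andP => t1c _; case/sqr_neq_sub_add/andP => t2c _ t12.
rewrite /nodal_z /nodal_sum.
have -> : (t1 * t2 + c ^+ 2) / (t1 + t2) + c = (t1 + c) * (t2 + c) / (t1 + t2).
  by field.
have -> : (t1 * t2 + c ^+ 2) / (t1 + t2) - c = (t1 - c) * (t2 - c) / (t1 + t2).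
  by field.
by field; rewrite t12 t1c t2c.
Qed.
End NodalCubic.

Section Specialization.
Variables (R : idomainType) (L : fieldType) (phi : {rmorphism R -> L}).
Local Notation K := {fraction R}.

Definition specializes (x : K) (r : L) :=
  exists n d : R, [/\ phi d != 0, x = tofrac n / tofrac d & r = phi n / phi d].

Lemma tofrac_neq0 (d : R) : phi d != 0 -> tofrac d != 0 :> K.
Proof.
apply: contraNneq; rewrite -tofrac0 => /eqP.
by rewrite tofrac_eq => /eqP ->; rewrite rmorph0.
Qed.

Lemma specializes_uniq x r r' : specializes x r -> specializes x r' -> r = r'.
Proof.
case=> n [d [d0 -> ->]] [n' [d' [d'0 /eqP + ->]]].
rewrite eqr_div ?tofrac_neq0 // -!tofracM tofrac_eq => /eqP e.
by apply/eqP; rewrite eqr_div // -!rmorphM e.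
Qed.

Lemma specializes_tofrac (n : R) : specializes (tofrac n) (phi n).
Proof. by exists n, 1; rewrite rmorph1 oner_neq0 tofrac1 !divr1. Qed.

Lemma specializes1 : specializes 1 1.
Proof. by rewrite -tofrac1 -(rmorph1 phi); apply: specializes_tofrac. Qed.

Lemma specializes_nat k : specializes k%:R k%:R.
Proof. by have := specializes_tofrac k%:R; rewrite tofracMn tofrac1 rmorph_nat. Qed.

Lemma specializesD x y r s :
  specializes x r -> specializes y s -> specializes (x + y) (r + s).
Proof.
case=> n [d [d0 -> ->]] [n' [d' [d'0 -> ->]]].
exists (n * d' + n' * d), (d * d'); split; first by rewrite rmorphM mulf_neq0.
  by rewrite tofracD !tofracM addf_div ?tofrac_neq0.
by rewrite rmorphD !rmorphM addf_div.
Qed.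

Lemma specializesN x r : specializes x r -> specializes (- x) (- r).
Proof.
case=> n [d [d0 -> ->]]; exists (- n), d.
by rewrite tofracN rmorphN !mulNr.
Qed.

Lemma specializesM x y r s :
  specializes x r -> specializes y s -> specializes (x * y) (r * s).
Proof.
case=> n [d [d0 -> ->]] [n' [d' [d'0 -> ->]]].
exists (n * n'), (d * d'); split; first by rewrite rmorphM mulf_neq0.
  by rewrite !tofracM mulf_div.
by rewrite !rmorphM mulf_div.
Qed.

Lemma specializesX x r k : specializes x r -> specializes (x ^+ k) (r ^+ k).
Proof.
move=> xr; elim: k => [|k IH]; first by rewrite !expr0; apply: specializes1.
by rewrite !exprS; apply: specializesM.
Qed.

Lemma specializesV x r : specializes x r -> r != 0 -> specializes x^-1 r^-1.
Proof.
case=> n [d [d0 -> ->]] r0.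
have n0 : phi n != 0 by apply: contraNneq r0 => ->; rewrite mul0r.
by exists d, n; rewrite !invf_div.
Qed.

Lemma specializes_neq0 x r : specializes x r -> r != 0 -> x != 0.
Proof.
move=> xr; apply: contraNneq => x0; rewrite x0 in xr.
by apply/eqP; exact: specializes_uniq xr (specializes_nat 0).
Qed.

End Specialization.

Ltac specializes_rational :=
  repeat match goal with
  | H : specializes _ ?x _ |- specializes _ ?x _ => exact: H
  | |- specializes _ (_ + _) _ => apply: specializesD
  | |- specializes _ (- _) _ => apply: specializesN
  | |- specializes _ (_ * _) _ => apply: specializesM
  | |- specializes _ (_ ^-1) _ => apply: specializesV
  | |- specializes _ (_ ^+ _) _ => apply: specializesX
  | |- specializes _ (_ %:R) _ => apply: specializes_nat
  | |- specializes _ 1 _ => apply: specializes1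
  end.

Section SpecializedPoints.
Variables (R : idomainType) (L : fieldType) (phi : {rmorphism R -> L}).
Local Notation K := {fraction R}.
Local Notation specializes := (specializes phi).

Definition specializes_pt (X : point K) (Z : point L) : Prop :=
  match X, Z with
  | Some (x, y), Some (r, s) => specializes x r /\ specializes y s
  | None, None => True
  | _, _ => False
  end.

Lemma specializes_pt_uniq X Z W : specializes_pt X Z -> specializes_pt X W -> Z = W.
Proof.
case: X Z W => [[x y]|] [[r s]|] [[r' s']|] //= [xr ys] [xr' ys'].
by rewrite (specializes_uniq xr xr') (specializes_uniq ys ys').
Qed.

Lemma specializes_pt_neg X Z : specializes_pt X Z -> specializes_pt (neg_pt X) (neg_pt Z).
Proof. by case: X Z => [[x y]|] [[r s]|] //= [xr /specializesN]. Qed.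

Lemma specializes_pt_chord (A : K) (A' : L) x1 y1 x2 y2 r1 s1 r2 s2 :
  specializes x1 r1 -> specializes y1 s1 -> specializes x2 r2 -> specializes y2 s2 ->
  r1 != r2 ->
  specializes_pt (add_pt A (Some (x1, y1)) (Some (x2, y2)))
                 (add_pt A' (Some (r1, s1)) (Some (r2, s2))).
Proof.
move=> x1r y1s x2r y2s r12.
have x12 : x1 != x2.
  by apply: contraNneq r12 => x12; rewrite x12 in x1r; rewrite (specializes_uniq x1r x2r).
rewrite /= (negbTE r12) (negbTE x12); split; specializes_rational.
all: by rewrite subr_eq0 eq_sym.
Qed.

Lemma specializes_pt_double (A : K) (A' : L) x y r s :
  specializes A A' -> specializes x r -> specializes y s -> s != - s ->
  specializes_pt (add_pt A (Some (x, y)) (Some (x, y)))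
                 (add_pt A' (Some (r, s)) (Some (r, s))).
Proof.
move=> AA' xr ys ss.
have yy : y != - y.
  apply: contraNneq ss => yy; apply/eqP/(specializes_uniq ys).
  by rewrite {1}yy; apply: specializesN.
have s2 : 2%:R * s != 0.
  by rewrite mulr_natl mulr2n -{2}[s]opprK subr_eq0.
by rewrite /= !eqxx (negbTE ss) (negbTE yy); split; specializes_rational.
Qed.
End SpecializedPoints.

Section NodalSpecialization.
Variables (R : idomainType) (L : fieldType) (phi : {rmorphism R -> L}).
Hypotheses (two_neq0 : 2%:R != 0 :> L) (three_neq0 : 3%:R != 0 :> L).
Variables (c : L) (A : {fraction R}).
Hypothesis specA : specializes phi A (nodal_A c).
Local Notation z := (nodal_z c).

Definition specializes_nodal (X : point {fraction R}) (t : L) :=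
  specializes_pt phi X (nodal_pt c t) /\ t ^+ 2 != c ^+ 2.

Lemma specializes_nodal_neq_None X t : specializes_nodal X t -> X != None.
Proof. by case: X => [//|[]]. Qed.

Lemma specializes_nodal_neg X t :
  specializes_nodal X t -> specializes_nodal (neg_pt X) (- t).
Proof.
case=> Xt tc; split; last by rewrite sqrrN.
by rewrite -nodal_neg; apply: specializes_pt_neg.
Qed.

(* For t1 = t2 the x-coordinates of X and Y may still differ in Frac R, so the
   tangent case is only available for X = Y. *)
Lemma specializes_nodal_add X Y t1 t2 :
    specializes_nodal X t1 -> specializes_nodal Y t2 ->
    t1 + t2 != 0 -> t1 != t2 \/ X = Y ->
  specializes_nodal (add_pt A X Y) (nodal_sum c t1 t2).
Proof.
case=> Xt t1c [Yt t2c] t12 t12_or_XY; split; last exact: nodal_sum_sqr.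
rewrite -nodal_add //; case: t12_or_XY => [n12 | XY].
  case: X Xt => [[x1 y1]|] [] // x1r y1s; case: Y Yt => [[x2 y2]|] [] // x2r y2s.
  apply: specializes_pt_chord => //.
  by rewrite (inj_eq (addIr _)) eqf_sqr negb_or n12 -addr_eq0.
rewrite -XY in Yt *.
rewrite -(nodal_pt_inj two_neq0 t1c (specializes_pt_uniq Xt Yt)) in t12 *.
have t1_neq0 : t1 != 0 by apply: contraNneq t12 => ->; rewrite addr0.
case: X Xt {XY Yt} => [[x y]|] [] // xr ys.
by apply: specializes_pt_double => //; apply: nodal_y_neq_opp.
Qed.

Lemma specializes_nodal_iter P t :
    specializes_nodal P t -> (forall n, (0 < n)%N -> z t ^+ n != 1) ->
  forall k, exists t',
    specializes_nodal (iter k.+1 (add_pt A P) None) t' /\ z t' = z t ^+ k.+1.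
Proof.
move=> Pt z_nontors; have [_ tc] := Pt; have zt0 := nodal_z_neq0 tc.
have addP0 : add_pt A P None = P by case: P {Pt} => [[]|].
elim=> [|k [t' [Pt' zt']]]; first by exists t; rewrite /= addP0 expr1.
have [_ t'c] := Pt'.
have tt' : t + t' != 0.
  apply: contra (z_nontors k.+2 isT); rewrite addrC addr_eq0 => /eqP t'E.
  by move: zt'; rewrite t'E nodal_zN // => zt'; rewrite exprS -zt' mulfV.
exists (nodal_sum c t t'); split; last by rewrite nodal_zM // zt' -exprS.
apply: specializes_nodal_add => //.
have [k0 | k_gt0] := posnP k; first by right; rewrite k0 /= addP0.
left; apply: contraTneq (z_nontors k k_gt0) => t_eq_t'; rewrite negbK; apply/eqP.
by apply: (mulfI zt0); rewrite -exprS -zt' -t_eq_t' mulr1.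
Qed.

Lemma specializes_nodal_mul P t (a : int) : specializes_nodal P t ->
    (forall n, (0 < n)%N -> z t ^+ n != 1) -> a != 0 ->
  exists t', specializes_nodal (mul_pt A a P) t' /\ z t' = z t ^ a.
Proof.
move=> Pt z_nontors; case: a => [[|k]|k] // _.
  exact: specializes_nodal_iter.
have [t' [Pt' zt']] := specializes_nodal_iter Pt z_nontors k.
exists (- t'); split; first exact: specializes_nodal_neg.
by rewrite nodal_zN ?zt' //; case: Pt'.
Qed.

Lemma pts_independent_by_specialization P H tP tH :
    specializes_nodal P tP -> specializes_nodal H tH ->
    (forall a b : int, z tP ^ a * z tH ^ b = 1 -> a = 0 /\ b = 0) ->
  pts_independent A P H.
Proof.
move=> PtP HtH z_indep a b.
have tP_nontors n : (0 < n)%N -> z tP ^+ n != 1.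
  move=> n_gt0; apply/eqP => zn.
  by have [[n0] _] := z_indep n 0 (etrans (mulr1 _) zn); rewrite n0 in n_gt0.
have tH_nontors n : (0 < n)%N -> z tH ^+ n != 1.
  move=> n_gt0; apply/eqP => zn.
  by have [_ [n0]] := z_indep 0 n (etrans (mul1r _) zn); rewrite n0 in n_gt0.
have [-> | a0] := eqVneq a 0; have [-> | b0] := eqVneq b 0 => //.
- have [t [Ht _]] := specializes_nodal_mul HtH tH_nontors b0.
  by rewrite (_ : mul_pt A 0 P = None) //= => bH0; case: Ht; rewrite bH0.
- have [t [Pt _]] := specializes_nodal_mul PtP tP_nontors a0.
  rewrite (_ : mul_pt A 0 H = None) //.
  by move: (specializes_nodal_neq_None Pt); case: mul_pt => [[]|].
have [t1 [[Pt1 t1c] zt1]] := specializes_nodal_mul PtP tP_nontors a0.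
have [t2 [Ht2 zt2]] := specializes_nodal_mul HtH tH_nontors b0.
have [_ t2c] := Ht2; have [Ht2' _] := specializes_nodal_neg Ht2.
move/add_pt_eq_None => PH; rewrite PH in Pt1.
have t12 := nodal_pt_inj two_neq0 t1c (specializes_pt_uniq Pt1 Ht2').
have [a_eq0 _] : a = 0 /\ b = 0.
  by apply: z_indep; rewrite -zt1 -zt2 t12 nodal_zN // mulVf // nodal_z_neq0.
by rewrite a_eq0 eqxx in a0.
Qed.
End NodalSpecialization.

Lemma on_curve_P_pt (F : fieldType) (m q : F) :
  3%:R != 0 :> F -> on_curve (EA m q) (EB m q) (P_pt m q).
Proof.
move=> three_neq0.
have nine_neq0 : 9%:R != 0 :> F by rewrite (natrM _ 3 3) mulf_neq0.
by apply/eqP; rewrite /EA /EB /P_pt /=; field; rewrite (natrM _ 3 9) three_neq0 mulf_neq0.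
Qed.

Lemma on_curve_H_pt (F : fieldType) (m u : F) :
    3%:R != 0 :> F -> 1 + m ^+ 2 - u ^+ 2 != 0 ->
  on_curve (EA m (2%:R * (u - m) / (1 + m ^+ 2 - u ^+ 2)))
           (EB m (2%:R * (u - m) / (1 + m ^+ 2 - u ^+ 2))) (H_pt m u).
Proof.
move=> three_neq0 den_neq0.
have nine_neq0 : 9%:R != 0 :> F by rewrite (natrM _ 3 3) mulf_neq0.
apply/eqP; rewrite /EA /EB /H_pt /=; field.
by rewrite den_neq0 (natrM _ 3 9) three_neq0 mulf_neq0.
Qed.

Lemma expn32_inj (k l k' l' : nat) :
  (3 ^ k * 2 ^ l = 3 ^ k' * 2 ^ l')%N -> k = k' /\ l = l'.
Proof.
have logn3 a b : logn 3 (3 ^ a * 2 ^ b) = a.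
  by rewrite lognM ?expn_gt0 // !lognX (pfactorK 1) // muln0 addn0 muln1.
have logn2 a b : logn 2 (3 ^ a * 2 ^ b) = b.
  by rewrite lognM ?expn_gt0 // !lognX (pfactorK 1) // muln0 add0n muln1.
by move=> e; split; [rewrite -(logn3 k l) e logn3 | rewrite -(logn2 k l) e logn2].
Qed.

Lemma exprz3_eq_exprz2 (R : numFieldType) (i j : int) :
  3%:R ^ i = 2%:R ^ j :> R -> i = 0 /\ j = 0.
Proof.
have int_sub_nat (z : int) : exists n p : nat, z = n%:Z - p%:Z.
  by case: z => n; [exists n, 0%N | exists 0%N, n.+1]; rewrite ?subr0 ?sub0r.
have [i1 [i2 ->]] := int_sub_nat i; have [j1 [j2 ->]] := int_sub_nat j.
rewrite !expfzDr ?pnatr_eq0 // -!exprnN => /eqP.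
rewrite -!exprnP eqr_div ?expf_neq0 ?pnatr_eq0 // -!natrX -!natrM eqr_nat.
rewrite [(2 ^ j1 * _)%N]mulnC => /eqP.
by case/expn32_inj => -> ->; rewrite !subrr.
Qed.

Lemma rectC_nat_neq0 (a b : nat) : b != 0%N -> a%:R + 'i * b%:R != 0 :> algC.
Proof.
move=> b0; apply: contraNneq b0 => /(congr1 (fun z => 'Im z)).
by rewrite Im_rect ?realn // raddf0 => /eqP; rewrite pnatr_eq0.
Qed.

Fact ratr_comm_i : commr_rmorph (ratr : rat -> algC) 'i.
Proof. by move=> a; apply: mulrC. Qed.

Fact eval_i_comm_u : commr_rmorph (horner_morph ratr_comm_i) (- 'i / 3%:R).
Proof. by move=> a; apply: mulrC. Qed.

Definition ev_mu : {rmorphism {poly {poly rat}} -> algC} := horner_morph eval_i_comm_u.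

Local Notation sqr_i := (@sqrCi algC).

(* Turns [specializes phi x r] into an equation [r' = r] in L, where r' is
   obtained by specialising x operation by operation. *)
Ltac specializes_up_to_eq :=
  match goal with |- specializes ?phi ?x _ =>
    apply: (@eq_ind _ _ (specializes phi x));
    first by specializes_rational; rewrite ?mulf_eq0 ?expf_eq0 ?invr_eq0 ?pnatr_eq0
  end.

Lemma ev_m_var : specializes ev_mu m_var 'i.
Proof.
have evX : ev_mu ('X%:P) = 'i.
  by rewrite -(horner_morphX ratr_comm_i); apply: horner_morphC.
by rewrite -evX; apply: specializes_tofrac.
Qed.

Lemma ev_u_var : specializes ev_mu u_var (- 'i / 3%:R).
Proof.
have evX : ev_mu 'X = - 'i / 3%:R by apply: horner_morphX.
by rewrite -evX; apply: specializes_tofrac.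
Qed.

Lemma ev_den : specializes ev_mu (1 + m_var ^+ 2 - u_var ^+ 2) 9%:R^-1.
Proof.
have evm := ev_m_var; have evu := ev_u_var.
by specializes_up_to_eq; field: sqr_i; rewrite ?pnatr_eq0.
Qed.

Lemma ev_q_mu : specializes ev_mu q_mu (- 24%:R * 'i).
Proof.
have evm := ev_m_var; have evu := ev_u_var; have evd := ev_den.
by rewrite /q_mu; specializes_up_to_eq; field: sqr_i; rewrite ?pnatr_eq0.
Qed.

Lemma ev_EA : specializes ev_mu (EA m_var q_mu) (nodal_A (5%:R * 'i)).
Proof.
have evm := ev_m_var; have evq := ev_q_mu.
by rewrite /EA; specializes_up_to_eq; rewrite /nodal_A; field: sqr_i; rewrite ?pnatr_eq0.
Qed.

Lemma ev_P_pt :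
  specializes_nodal ev_mu (5%:R * 'i) (P_pt m_var q_mu) (25%:R * 'i).
Proof.
have evm := ev_m_var; have evq := ev_q_mu.
split; first split; try specializes_up_to_eq.
- by rewrite /nodal_x; field: sqr_i; rewrite ?pnatr_eq0.
- by rewrite /nodal_y; ring: sqr_i.
- by rewrite !exprMn sqr_i !mulrN1 eqr_opp -!natrX eqr_nat.
Qed.

Lemma ev_H_pt :
  specializes_nodal ev_mu (5%:R * 'i) (H_pt m_var u_var) (- 3%:R - 4%:R * 'i).
Proof.
have evm := ev_m_var; have evu := ev_u_var.
have evd : specializes ev_mu (m_var ^+ 2 - u_var ^+ 2 + 1) 9%:R^-1.
  by rewrite addrC addrA; exact: ev_den.
split; first split; try specializes_up_to_eq.
- by rewrite /nodal_x; field: sqr_i; rewrite ?pnatr_eq0.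
- by rewrite /nodal_y; field: sqr_i; rewrite ?pnatr_eq0.
rewrite -subr_eq0.
have -> : (- 3%:R - 4%:R * 'i) ^+ 2 - (5%:R * 'i) ^+ 2 = 18%:R + 'i * 24%:R :> algC.
  by ring: sqr_i.
exact: rectC_nat_neq0.
Qed.

Lemma nodal_z_P : nodal_z (5%:R * 'i : algC) (25%:R * 'i) = 3%:R / 2%:R.
Proof.
by rewrite /nodal_z; field; rewrite -mulrBl -natrB // mulf_neq0 ?pnatr_eq0 ?neq0Ci.
Qed.

Lemma nodal_z_H : nodal_z (5%:R * 'i : algC) (- 3%:R - 4%:R * 'i) = - 'i / 3%:R.
Proof.
have den : - 3%:R - 4%:R * 'i - 5%:R * 'i = - (3%:R + 'i * 9%:R) :> algC by ring.
by rewrite /nodal_z den; field: sqr_i; exact: rectC_nat_neq0.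
Qed.

Lemma z_values_independent (a b : int) :
  (3%:R / 2%:R : algC) ^ a * (- 'i / 3%:R) ^ b = 1 -> a = 0 /\ b = 0.
Proof.
have normr_exprz (x : algC) (n : int) : `|x ^ n| = @exprz algC `|x| n.
  by case: n => n; rewrite /= ?normfV normrX.
have norm_zP : `|3%:R / 2%:R : algC| = 3%:R / 2%:R.
  by rewrite ger0_norm ?divr_ge0 ?ler0n.
have norm_zH : `|- 'i / 3%:R : algC| = 3%:R^-1.
  by rewrite normrM normrN normCi mul1r normfV normr_nat.
move/(congr1 (fun x : algC => `|x| : algC)).
rewrite normr1 normrM !normr_exprz norm_zP norm_zH expfzMl !exprz_inv mulrAC => e.
have {}e : (3%:R : algC) ^ (a - b) * 2%:R ^ (- a) = 1 by rewrite expfzDr ?pnatr_eq0.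
have /exprz3_eq_exprz2 [ab a0] : 3%:R ^ (a - b) = 2%:R ^ a :> algC.
  have two_neq0 : 2%:R != 0 :> algC by rewrite pnatr_eq0.
  by apply: (mulIf (expfz_neq0 (- a) two_neq0)); rewrite e -expfzDr // subrr expr0z.
by split=> //; move/eqP: ab; rewrite a0 sub0r oppr_eq0 => /eqP.
Qed.

Theorem theorem3 :
  let A := EA m_var q_mu in
  let B := EB m_var q_mu in
  let P := P_pt m_var q_mu in
  let H := H_pt m_var u_var in
  [/\ on_curve A B P, on_curve A B H & pts_independent A P H].
Proof.
have three_neq0 : 3%:R != 0 :> algC by rewrite pnatr_eq0.
have three_neq0_K : 3%:R != 0 :> Kmu.
  exact: specializes_neq0 (specializes_nat ev_mu 3) three_neq0.
have den_neq0 : 1 + m_var ^+ 2 - u_var ^+ 2 != 0.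
  by apply: specializes_neq0 ev_den _; rewrite invr_eq0 pnatr_eq0.
split; first exact: (on_curve_P_pt m_var q_mu three_neq0_K).
  exact: (on_curve_H_pt three_neq0_K den_neq0).
apply: (pts_independent_by_specialization _ three_neq0 ev_EA ev_P_pt ev_H_pt)
  => [|a b].
  by rewrite pnatr_eq0.
by rewrite nodal_z_P nodal_z_H; apply: z_values_independent.
Qed.
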